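(* Let $t$ be a positive integer, $n_1,\dots,n_t$ positive integers, and $h_1,\dots,h_t\in\mathbb{R}^d$. Suppose that the subgroup $G=h_1\mathbb{Z}+\dots+h_t\mathbb{Z}$ of $\mathbb{R}^d$ has Euclidean closure $\overline{G}=V\oplus\Lambda$, where $V$ is a proper vector subspace of $\mathbb{R}^d$ and $\Lambda$ is a discrete additive subgroup of $\mathbb{R}^d$. Then there exist a finite dimensional linear subspace $H\subseteq C(\mathbb{R}^d)$ with $\bigcup_{k=1}^t\Delta_{h_k}(H)\subseteq H$ and a continuous function $\varphi:\mathbb{R}^d\to\mathbb{R}$ with $\Delta_{h_k}^{n_k}\varphi\in H$ for $k=1,\dots,t$, such that $\varphi$ is not an exponential polynomial on $\mathbb{R}^d$.
   Context: $C(\mathbb{R}^d)$ is the space of continuous complex valued functions on $\mathbb{R}^d$; $(\Delta_hf)(x)=f(x+h)-f(x)$ and $\Delta_h^m$ is its $m$-fold composition. An exponential polynomial on $\mathbb{R}^d$ is a function of the form $x\mapsto\sum_{j=1}^r p_j(x)e^{\langle\lambda_j,x\rangle}$ with polynomials $p_j$ and $\lambda_j\in\mathbb{C}^d$. *)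

From Stdlib Require Import Reals Lra ZArith List.
From Stdlib Require Fin.
Open Scope R_scope.

Definition Cplx : Type := (R * R)%type.
Definition CR (r : R) : Cplx := (r, 0).
Definition C0 : Cplx := (0, 0).
Definition Cadd (z w : Cplx) : Cplx := (fst z + fst w, snd z + snd w).
Definition Copp (z : Cplx) : Cplx := (- fst z, - snd z).
Definition Csub (z w : Cplx) : Cplx := Cadd z (Copp w).
Definition Cmul (z w : Cplx) : Cplx :=
  (fst z * fst w - snd z * snd w, fst z * snd w + snd z * fst w).
Definition Cexp (z : Cplx) : Cplx :=
  (exp (fst z) * cos (snd z), exp (fst z) * sin (snd z)).
Definition Cnorm (z : Cplx) : R := sqrt (fst z ^ 2 + snd z ^ 2).

Fixpoint rsum (n : nat) (f : nat -> R) : R :=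
  match n with O => 0 | S m => rsum m f + f m end.
Fixpoint csum_list (l : list Cplx) : Cplx :=
  match l with nil => C0 | z :: l' => Cadd z (csum_list l') end.

Fixpoint finsum (d : nat) : (Fin.t d -> R) -> R :=
  match d return (Fin.t d -> R) -> R with
  | O => fun _ => 0
  | S m => fun f => f Fin.F1 + finsum m (fun i => f (Fin.FS i))
  end.
Fixpoint cfinsum (d : nat) : (Fin.t d -> Cplx) -> Cplx :=
  match d return (Fin.t d -> Cplx) -> Cplx with
  | O => fun _ => C0
  | S m => fun f => Cadd (f Fin.F1) (cfinsum m (fun i => f (Fin.FS i)))
  end.

Definition Rd (d : nat) : Type := Fin.t d -> R.
Definition vzero (d : nat) : Rd d := fun _ => 0.
Definition vadd {d} (x y : Rd d) : Rd d := fun i => x i + y i.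
Definition vopp {d} (x : Rd d) : Rd d := fun i => - x i.
Definition vsub {d} (x y : Rd d) : Rd d := fun i => x i - y i.
Definition vscal {d} (a : R) (x : Rd d) : Rd d := fun i => a * x i.
Definition vnorm {d} (x : Rd d) : R := sqrt (finsum d (fun i => x i ^ 2)).

Definition ccontinuous {d} (f : Rd d -> Cplx) : Prop :=
  forall x eps, 0 < eps -> exists delta, 0 < delta /\
    forall y, vnorm (vsub y x) < delta -> Cnorm (Csub (f y) (f x)) < eps.
Definition rcontinuous {d} (f : Rd d -> R) : Prop :=
  forall x eps, 0 < eps -> exists delta, 0 < delta /\
    forall y, vnorm (vsub y x) < delta -> Rabs (f y - f x) < eps.

Definition Diff {d} (h : Rd d) (f : Rd d -> Cplx) : Rd d -> Cplx :=
  fun x => Csub (f (vadd x h)) (f x).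
Fixpoint DiffPow {d} (h : Rd d) (m : nat) (f : Rd d -> Cplx) : Rd d -> Cplx :=
  match m with O => f | S k => Diff h (DiffPow h k f) end.

Definition in_span {d} (gs : list (Rd d -> Cplx)) (f : Rd d -> Cplx) : Prop :=
  exists cs : list Cplx, length cs = length gs /\
    forall x, f x = csum_list (map (fun p => Cmul (fst p) ((snd p) x)) (combine cs gs)).

Definition fin_dim_subspace_C {d} (H : (Rd d -> Cplx) -> Prop) : Prop :=
  (forall f, H f -> ccontinuous f) /\
  H (fun _ => C0) /\
  (forall f g, H f -> H g -> H (fun x => Cadd (f x) (g x))) /\
  (forall (c : Cplx) f, H f -> H (fun x => Cmul c (f x))) /\
  (exists gs : list (Rd d -> Cplx), forall f, H f -> in_span gs f).

Inductive is_poly {d : nat} : (Rd d -> Cplx) -> Prop :=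
| poly_const : forall c : Cplx, is_poly (fun _ => c)
| poly_coord : forall i : Fin.t d, is_poly (fun x => CR (x i))
| poly_add : forall p q, is_poly p -> is_poly q -> is_poly (fun x => Cadd (p x) (q x))
| poly_mul : forall p q, is_poly p -> is_poly q -> is_poly (fun x => Cmul (p x) (q x)).

Definition cdot {d} (lam : Fin.t d -> Cplx) (x : Rd d) : Cplx :=
  cfinsum d (fun i => Cmul (lam i) (CR (x i))).

Definition exp_poly {d} (f : Rd d -> Cplx) : Prop :=
  exists terms : list ((Rd d -> Cplx) * (Fin.t d -> Cplx)),
    (forall pl, In pl terms -> is_poly (fst pl)) /\
    forall x, f x = csum_list (map (fun pl => Cmul ((fst pl) x) (Cexp (cdot (snd pl) x))) terms).

(* G = h_0 Z + ... + h_{t-1} Z *)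
Definition gen_subgroup {d} (t : nat) (h : nat -> Rd d) (x : Rd d) : Prop :=
  exists m : nat -> Z, x = (fun i => rsum t (fun k => IZR (m k) * h k i)).

Definition closure {d} (S : Rd d -> Prop) (x : Rd d) : Prop :=
  forall eps, 0 < eps -> exists y, S y /\ vnorm (vsub x y) < eps.

Definition is_vsubspace {d} (V : Rd d -> Prop) : Prop :=
  V (vzero d) /\ (forall x y, V x -> V y -> V (vadd x y)) /\
  (forall a x, V x -> V (vscal a x)).

Definition is_add_subgroup {d} (L : Rd d -> Prop) : Prop :=
  L (vzero d) /\ (forall x y, L x -> L y -> L (vadd x y)) /\
  (forall x, L x -> L (vopp x)).

Definition is_discrete {d} (L : Rd d -> Prop) : Prop :=
  forall x, L x -> exists eps, 0 < eps /\
    forall y, L y -> vnorm (vsub y x) < eps -> y = x.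

Definition is_direct_sum {d} (S V L : Rd d -> Prop) : Prop :=
  (forall x, S x <-> exists v l, V v /\ L l /\ x = vadd v l) /\
  (forall x, V x -> L x -> x = vzero d).

(* V (+) Lambda, the closure of G, is not all of R^d because V is proper and Lambda is
   discrete.  Take for phi the distance to G (in the l1 norm, whose triangle inequality is
   coordinatewise): it is continuous and G-periodic, so every Delta_{h_k} phi vanishes and
   H = {0} works.  But phi is not an exponential polynomial: if p is a nearest point of the
   closure of G to some y outside it, then along the line through p and y the function phi
   vanishes at p, is nonnegative, and grows with slope |y - p| towards y, so it has a corner
   at p, whereas exponential polynomials are differentiable along lines. *)

From Stdlib Require Import Reals ZArith List.
From Stdlib Require Import Lra Lia FunctionalExtensionality ClassicalEpsilon Classical.
From Stdlib Require Fin.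
Open Scope R_scope.

Lemma finsum_ext d (f g : Fin.t d -> R) :
  (forall i, f i = g i) -> finsum d f = finsum d g.
Proof.
  revert f g; induction d as [|d IH]; intros f g Hfg; simpl; auto.
  rewrite Hfg, (IH (fun i => f (Fin.FS i)) (fun i => g (Fin.FS i))); auto.
Qed.

Lemma finsum_le d (f g : Fin.t d -> R) :
  (forall i, f i <= g i) -> finsum d f <= finsum d g.
Proof.
  revert f g; induction d as [|d IH]; intros f g Hfg; simpl; [lra|].
  pose proof (IH (fun i => f (Fin.FS i)) (fun i => g (Fin.FS i)) (fun i => Hfg _)).
  specialize (Hfg Fin.F1); lra.
Qed.

Lemma finsum_add d (f g : Fin.t d -> R) :
  finsum d (fun i => f i + g i) = finsum d f + finsum d g.
Proof.
  revert f g; induction d as [|d IH]; intros f g; simpl; [lra|].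
  rewrite (IH (fun i => f (Fin.FS i)) (fun i => g (Fin.FS i))); lra.
Qed.

Lemma finsum_scal d (c : R) (f : Fin.t d -> R) :
  finsum d (fun i => c * f i) = c * finsum d f.
Proof.
  revert f; induction d as [|d IH]; intros f; simpl; [lra|].
  rewrite (IH (fun i => f (Fin.FS i))); lra.
Qed.

Lemma finsum_const d (c : R) : finsum d (fun _ => c) = INR d * c.
Proof. induction d as [|d IH]; simpl; [lra|]. rewrite IH. destruct d; simpl; lra. Qed.

Lemma finsum_nonneg d (f : Fin.t d -> R) : (forall i, 0 <= f i) -> 0 <= finsum d f.
Proof.
  intros Hf. rewrite <- (Rmult_0_r (INR d)), <- finsum_const.
  now apply finsum_le.
Qed.

Lemma finsum_term_le d (f : Fin.t d -> R) :
  (forall i, 0 <= f i) -> forall i, f i <= finsum d f.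
Proof.
  revert f; induction d as [|d IH]; intros f Hf i.
  - exact (Fin.case0 (fun i => f i <= finsum 0 f) i).
  - pattern i; apply Fin.caseS'; simpl.
    + pose proof (finsum_nonneg d (fun i => f (Fin.FS i)) (fun i => Hf _)); lra.
    + intros j.
      pose proof (IH (fun i => f (Fin.FS i)) (fun i => Hf _) j).
      specialize (Hf Fin.F1); lra.
Qed.

Lemma finsum_sqr_le_sqr_abs d (f : Fin.t d -> R) :
  finsum d (fun i => f i ^ 2) <= finsum d (fun i => Rabs (f i)) ^ 2.
Proof.
  revert f; induction d as [|d IH]; intros f; simpl; [lra|].
  specialize (IH (fun i => f (Fin.FS i))). simpl in IH.
  pose proof (finsum_nonneg d (fun i => Rabs (f (Fin.FS i))) (fun i => Rabs_pos _)).
  pose proof (Rabs_pos (f Fin.F1)).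
  assert (f Fin.F1 * (f Fin.F1 * 1) = Rabs (f Fin.F1) * Rabs (f Fin.F1)).
  { rewrite Rmult_1_r, <- Rabs_mult, Rabs_right; [reflexivity|]. nra. }
  nra.
Qed.

Definition l1norm {d} (x : Rd d) : R := finsum d (fun i => Rabs (x i)).

Lemma l1norm_nonneg d (x : Rd d) : 0 <= l1norm x.
Proof. apply finsum_nonneg; intros; apply Rabs_pos. Qed.

Lemma Rabs_coord_le_l1norm d (x : Rd d) i : Rabs (x i) <= l1norm x.
Proof. apply (finsum_term_le d (fun i => Rabs (x i))); intros; apply Rabs_pos. Qed.

Lemma l1norm_triangle d (a b c : Rd d) :
  l1norm (vsub a c) <= l1norm (vsub a b) + l1norm (vsub b c).
Proof.
  unfold l1norm; rewrite <- finsum_add. apply finsum_le; intros i; unfold vsub.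
  replace (a i - c i) with ((a i - b i) + (b i - c i)) by ring.
  apply Rabs_triang.
Qed.

Lemma l1norm_sub_sym d (a b : Rd d) : l1norm (vsub a b) = l1norm (vsub b a).
Proof. apply finsum_ext; intros; apply Rabs_minus_sym. Qed.

Lemma l1norm_scal d (c : R) (x : Rd d) : l1norm (vscal c x) = Rabs c * l1norm x.
Proof.
  unfold l1norm; rewrite <- finsum_scal.
  apply finsum_ext; intros; apply Rabs_mult.
Qed.

Lemma l1norm_sub_pos d (x y : Rd d) : x <> y -> 0 < l1norm (vsub x y).
Proof.
  intros Hxy. destruct (Rle_lt_dec (l1norm (vsub x y)) 0) as [Hle|]; auto.
  exfalso; apply Hxy, functional_extensionality; intros i.
  pose proof (Rabs_coord_le_l1norm d (vsub x y) i) as Hi.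
  destruct (Req_dec (x i) (y i)) as [|Hne]; auto.
  apply Rminus_eq_contra, Rabs_pos_lt in Hne.
  change (vsub x y i) with (x i - y i) in Hi; lra.
Qed.

Lemma vsub_zero_r d (x : Rd d) : vsub x (vzero d) = x.
Proof. apply functional_extensionality; intros; unfold vsub, vzero; ring. Qed.

Lemma vnorm_le_l1norm d (x : Rd d) : vnorm x <= l1norm x.
Proof.
  unfold vnorm. rewrite <- (sqrt_pow2 (l1norm x)) by apply l1norm_nonneg.
  apply sqrt_le_1_alt, finsum_sqr_le_sqr_abs.
Qed.

Lemma Rabs_coord_le_vnorm d (x : Rd d) i : Rabs (x i) <= vnorm x.
Proof.
  unfold vnorm. rewrite <- sqrt_Rsqr_abs, Rsqr_pow2.
  apply sqrt_le_1_alt.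
  exact (finsum_term_le d (fun j => x j ^ 2) (fun j => pow2_ge_0 _) i).
Qed.

Lemma l1norm_le_vnorm d (x : Rd d) : l1norm x <= INR d * vnorm x.
Proof.
  unfold l1norm. rewrite <- finsum_const.
  apply finsum_le; intros; apply Rabs_coord_le_vnorm.
Qed.

Lemma archimed_inv (eps : R) :
  0 < eps -> exists N, forall k, (N <= k)%nat -> / (INR k + 1) < eps.
Proof.
  intros Heps. destruct (archimed_cor1 eps Heps) as [N [HN HN0]].
  exists N; intros k Hk.
  apply Rle_lt_trans with (/ INR N); auto.
  apply Rinv_le_contravar; [apply lt_0_INR; lia|].
  pose proof (le_INR _ _ Hk); lra.
Qed.

Fixpoint chain (next : nat -> nat -> nat) (k : nat) : nat :=
  match k with
  | O => next O O
  | S k' => next (S (chain next k')) (S k')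
  end.

Lemma increasing_extraction (P : nat -> nat -> Prop) :
  (forall N k, exists p, (N <= p)%nat /\ P k p) ->
  exists phi : nat -> nat, (forall k, phi k < phi (S k))%nat /\ forall k, P k (phi k).
Proof.
  intros HP.
  assert (next : forall N k, {p | (N <= p)%nat /\ P k p})
    by (intros; apply constructive_indefinite_description, HP).
  exists (chain (fun N k => proj1_sig (next N k))). split.
  - intros k; simpl.
    destruct (proj2_sig (next (S (chain (fun N k => proj1_sig (next N k)) k)) (S k))).
    lia.
  - intros [|k]; apply (proj2_sig (next _ _)).
Qed.

Lemma increasing_lt (phi : nat -> nat) :
  (forall k, phi k < phi (S k))%nat -> forall a b, (a < b)%nat -> (phi a < phi b)%nat.
Proof. intros Hinc a b Hab. induction Hab; [apply Hinc|]. specialize (Hinc m); lia. Qed.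

Lemma increasing_ge_id (phi : nat -> nat) :
  (forall k, phi k < phi (S k))%nat -> forall k, (k <= phi k)%nat.
Proof. intros Hinc k. induction k; [lia|]. specialize (Hinc k); lia. Qed.

Lemma bounded_R_cvg_subseq (u : nat -> R) (M : R) :
  (forall n, Rabs (u n) <= M) ->
  exists (phi : nat -> nat) (l : R),
    (forall k, phi k < phi (S k))%nat /\ Un_cv (fun k => u (phi k)) l.
Proof.
  intros Hb.
  destruct (Bolzano_Weierstrass u (fun c => -M <= c <= M) (compact_P3 (-M) M))
    as [l Hl].
  { intros n. pose proof (Hb n). pose proof (Rle_abs (u n)).
    pose proof (Rle_abs (- u n)). rewrite Rabs_Ropp in *. lra. }
  destruct (increasing_extraction (fun k p => Rabs (u p - l) < / (INR k + 1)))
    as [phi [Hinc Hphi]].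
  { intros N k.
    assert (Hpos : 0 < / (INR k + 1))
      by (apply Rinv_0_lt_compat; pose proof (pos_INR k); lra).
    destruct (Hl (fun x => Rabs (x - l) < / (INR k + 1)) N) as [p Hp]; eauto.
    exists (mkposreal _ Hpos); intros x Hx; exact Hx. }
  exists phi, l; split; auto.
  intros eps Heps. destruct (archimed_inv eps Heps) as [K HK].
  exists K; intros k Hk. eapply Rlt_trans; [apply Hphi|]. auto.
Qed.

Definition l1_cvg {d} (u : nat -> Rd d) (l : Rd d) : Prop :=
  forall eps, 0 < eps -> exists K, forall k, (K <= k)%nat -> l1norm (vsub (u k) l) < eps.

(* Bolzano-Weierstrass in R^d, one coordinate at a time. *)
Lemma bounded_cvg_subseq d (u : nat -> Rd d) (M : R) :
  (forall n, l1norm (u n) <= M) ->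
  exists (phi : nat -> nat) (l : Rd d),
    (forall k, phi k < phi (S k))%nat /\ l1_cvg (fun k => u (phi k)) l.
Proof.
  revert u; induction d as [|d IH]; intros u Hb.
  - exists (fun k => k), (vzero 0); split; [lia|].
    intros eps Heps; exists O; intros; unfold l1norm; simpl; lra.
  - destruct (bounded_R_cvg_subseq (fun n => u n Fin.F1) M) as [phi1 [l1 [Hinc1 Hcv1]]].
    { intros n. eapply Rle_trans; [apply Rabs_coord_le_l1norm|apply Hb]. }
    destruct (IH (fun n i => u (phi1 n) (Fin.FS i))) as [phi2 [l2 [Hinc2 Hcv2]]].
    { intros n. eapply Rle_trans; [|apply (Hb (phi1 n))]. unfold l1norm; simpl.
      pose proof (Rabs_pos (u (phi1 n) Fin.F1)); lra. }
    exists (fun k => phi1 (phi2 k)), (fun i => Fin.caseS' i (fun _ => R) l1 l2).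
    split; [intros k; apply increasing_lt; auto|].
    intros eps Heps.
    destruct (Hcv1 (eps / 2)) as [K1 HK1]; [lra|].
    destruct (Hcv2 (eps / 2)) as [K2 HK2]; [lra|].
    exists (max K1 K2); intros k Hk. unfold l1norm, vsub; simpl.
    specialize (HK2 k ltac:(lia)). unfold l1norm, vsub in HK2.
    pose proof (increasing_ge_id phi2 Hinc2 k).
    specialize (HK1 (phi2 k) ltac:(lia)). unfold R_dist in HK1. lra.
Qed.

Lemma add_subgroup_nat_mul d (L : Rd d -> Prop) (l : Rd d) :
  is_add_subgroup L -> L l -> forall k, L (vscal (INR k) l).
Proof.
  intros [HL0 [HLadd _]] Hl k. induction k as [|k IH].
  - replace (vscal (INR 0) l) with (vzero d); auto.
    apply functional_extensionality; intros; unfold vscal, vzero; simpl; ring.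
  - replace (vscal (INR (S k)) l) with (vadd l (vscal (INR k) l)); auto.
    apply functional_extensionality; intros; unfold vadd, vscal; rewrite S_INR; ring.
Qed.

(* If x0 = v + l and x0 / N = v' + l', then N v' - v = l - N l' lies in V and in L,
   hence vanishes; for N large, l' = l / N lies in L within the isolation radius of 0,
   so l' = 0, l = 0 and x0 = v is in V. *)
Lemma direct_sum_discrete_not_full d (S V L : Rd d -> Prop) (x0 : Rd d) :
  is_vsubspace V -> ~ V x0 -> is_add_subgroup L -> is_discrete L ->
  is_direct_sum S V L -> ~ (forall y, S y).
Proof.
  intros [_ [HVadd HVscal]] Hx0 HL Hdisc [HS Hdir] Hfull.
  pose proof HL as [HL0 [HLadd HLopp]].
  destruct (Hdisc _ HL0) as [eps [Heps Hiso]].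
  destruct (proj1 (HS x0) (Hfull x0)) as [v [l [Hv [Hl Hx0l]]]].
  assert (Hr : 0 < eps / (l1norm l + 1))
    by (pose proof (l1norm_nonneg d l); apply Rdiv_lt_0_compat; lra).
  destruct (archimed_cor1 _ Hr) as [N [HN HN0]].
  apply lt_0_INR in HN0.
  destruct (proj1 (HS (vscal (/ INR N) x0)) (Hfull _)) as [v' [l' [Hv' [Hl' Hdec]]]].
  assert (Hcoord : forall i, x0 i = INR N * (v' i + l' i)).
  { intros i. change (v' i + l' i) with (vadd v' l' i). rewrite <- Hdec.
    unfold vscal; field; lra. }
  assert (HlN : l = vscal (INR N) l').
  { set (w := vadd l (vopp (vscal (INR N) l'))).
    assert (Hw : w = vadd (vscal (INR N) v') (vscal (-1) v)).
    { apply functional_extensionality; intros i. unfold w, vadd, vopp, vscal.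
      pose proof (Hcoord i) as Hi. rewrite Hx0l in Hi. unfold vadd in Hi. lra. }
    assert (Hw0 : w = vzero d).
    { apply Hdir.
      - rewrite Hw; auto.
      - apply HLadd, HLopp, add_subgroup_nat_mul; auto. }
    apply functional_extensionality; intros i.
    assert (Hwi : w i = 0) by (rewrite Hw0; reflexivity).
    unfold w, vadd, vopp, vscal in Hwi |- *. lra. }
  assert (Hl'0 : l' = vzero d).
  { apply Hiso; auto. rewrite vsub_zero_r.
    eapply Rle_lt_trans; [apply vnorm_le_l1norm|].
    assert (Hscale : l1norm l = INR N * l1norm l')
      by (rewrite HlN, l1norm_scal, Rabs_right; lra).
    assert (Hsmall : / INR N * (l1norm l + 1) < eps).
    { apply Rmult_lt_reg_r with (/ (l1norm l + 1)).
      - pose proof (l1norm_nonneg d l); apply Rinv_0_lt_compat; lra.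
      - rewrite Rmult_assoc, Rinv_r by (pose proof (l1norm_nonneg d l); lra).
        rewrite Rmult_1_r; exact HN. }
    rewrite Hscale in Hsmall.
    replace (/ INR N * (INR N * l1norm l' + 1)) with (l1norm l' + / INR N)
      in Hsmall by (field; lra).
    pose proof (Rinv_0_lt_compat _ HN0); lra. }
  apply Hx0. replace x0 with v; auto.
  rewrite Hx0l, HlN, Hl'0. apply functional_extensionality; intros i.
  unfold vadd, vscal, vzero; ring.
Qed.

Lemma rsum_ext t (f g : nat -> R) : (forall j, f j = g j) -> rsum t f = rsum t g.
Proof. intros Hfg; induction t; simpl; auto. rewrite IHt, Hfg; auto. Qed.

Lemma rsum_add_indicator t (f : nat -> R) (c : R) (k : nat) :
  rsum t (fun j => f j + if Nat.eqb j k then c else 0)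
  = rsum t f + if Nat.ltb k t then c else 0.
Proof.
  induction t as [|t IH]; simpl; [lra|]. rewrite IH.
  destruct (Nat.ltb_spec k t), (Nat.ltb_spec k (S t)), (Nat.eqb_spec t k);
    try lia; lra.
Qed.

Lemma gen_subgroup_zero d t (h : nat -> Rd d) : gen_subgroup t h (vzero d).
Proof.
  exists (fun _ => 0%Z). apply functional_extensionality; intros i.
  unfold vzero. induction t as [|t IH]; simpl; [reflexivity|]. rewrite <- IH; ring.
Qed.

Lemma gen_subgroup_translate d t (h : nat -> Rd d) (k : nat) (z : Z) (g : Rd d) :
  (k < t)%nat -> gen_subgroup t h g -> gen_subgroup t h (vadd g (vscal (IZR z) (h k))).
Proof.
  intros Hk [m ->]. exists (fun j => (m j + if Nat.eqb j k then z else 0)%Z).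
  apply functional_extensionality; intros i. unfold vadd, vscal. symmetry.
  rewrite (rsum_ext t _ (fun j => IZR (m j) * h j i
                                 + if Nat.eqb j k then IZR z * h k i else 0)).
  - rewrite rsum_add_indicator. apply Nat.ltb_lt in Hk. rewrite Hk. reflexivity.
  - intros j. destruct (Nat.eqb_spec j k) as [->|]; rewrite ?plus_IZR, ?Z.add_0_r; ring.
Qed.

Lemma gen_subgroup_add_sub d t (h : nat -> Rd d) (k : nat) (g : Rd d) :
  (k < t)%nat -> gen_subgroup t h g ->
  gen_subgroup t h (vadd g (h k)) /\ gen_subgroup t h (vsub g (h k)).
Proof.
  intros Hk Hg. split.
  - replace (vadd g (h k)) with (vadd g (vscal (IZR 1) (h k)))
      by (apply functional_extensionality; intros; unfold vadd, vscal; ring).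
    now apply gen_subgroup_translate.
  - replace (vsub g (h k)) with (vadd g (vscal (IZR (-1)) (h k)))
      by (apply functional_extensionality; intros; unfold vadd, vsub, vscal; ring).
    now apply gen_subgroup_translate.
Qed.

Definition is_l1_dist {d} (S : Rd d -> Prop) (phi : Rd d -> R) : Prop :=
  (forall x g, S g -> phi x <= l1norm (vsub x g)) /\
  (forall x eps, 0 < eps -> exists g, S g /\ l1norm (vsub x g) < phi x + eps).

Lemma exists_l1_dist d (S : Rd d -> Prop) (g0 : Rd d) :
  S g0 -> exists phi, is_l1_dist S phi.
Proof.
  intros Hg0.
  set (E x r := exists g, S g /\ r = - l1norm (vsub x g)).
  assert (Hbound : forall x, bound (E x)).
  { intros x; exists 0; intros r [g [_ ->]]. pose proof (l1norm_nonneg d (vsub x g)); lra. }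
  assert (Hne : forall x, exists r, E x r) by (intros x; exists (- l1norm (vsub x g0)), g0; auto).
  exists (fun x => - proj1_sig (completeness (E x) (Hbound x) (Hne x))). split.
  - intros x g Hg. destruct (completeness _ _ _) as [m Hm]; simpl.
    destruct Hm as [Hub _].
    assert (- l1norm (vsub x g) <= m) by (apply Hub; exists g; auto). lra.
  - intros x eps Heps. destruct (completeness _ _ _) as [m Hm]; simpl.
    destruct Hm as [_ Hlub].
    apply NNPP; intros Hno.
    assert (m <= m - eps); [|lra].
    apply Hlub; intros r [g [Hg ->]].
    destruct (Rle_dec (- l1norm (vsub x g)) (m - eps)); auto.
    exfalso; apply Hno; exists g; split; auto; lra.
Qed.

Section L1Dist.
Variables (d : nat) (S : Rd d -> Prop) (phi : Rd d -> R).
Hypothesis Hphi : is_l1_dist S phi.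

Lemma l1_dist_nonneg x : 0 <= phi x.
Proof.
  apply Rle_plus_epsilon; intros eps Heps.
  destruct (proj2 Hphi x eps Heps) as [g [_ Hg]].
  pose proof (l1norm_nonneg d (vsub x g)); lra.
Qed.

Lemma l1_dist_lipschitz x x' : phi x <= phi x' + l1norm (vsub x x').
Proof.
  apply Rle_plus_epsilon; intros eps Heps.
  destruct (proj2 Hphi x' eps Heps) as [g [Hg Hlt]].
  pose proof (proj1 Hphi x g Hg). pose proof (l1norm_triangle d x x' g). lra.
Qed.

Lemma l1_dist_continuous : rcontinuous phi.
Proof.
  intros x eps Heps.
  assert (Hd : 0 < INR d + 1) by (pose proof (pos_INR d); lra).
  exists (eps / (INR d + 1)); split; [apply Rdiv_lt_0_compat; lra|].
  intros y Hy.
  pose proof (l1_dist_lipschitz y x). pose proof (l1_dist_lipschitz x y) as Hxy.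
  rewrite l1norm_sub_sym in Hxy.
  pose proof (l1norm_le_vnorm d (vsub y x)).
  assert (0 <= vnorm (vsub y x)) by apply sqrt_pos.
  assert ((INR d + 1) * vnorm (vsub y x) < eps).
  { replace eps with ((INR d + 1) * (eps / (INR d + 1))) by (field; lra).
    apply Rmult_lt_compat_l; auto. }
  apply Rabs_def1; nra.
Qed.

Lemma l1_dist_periodic (v : Rd d) :
  (forall g, S g -> S (vadd g v) /\ S (vsub g v)) -> forall x, phi (vadd x v) = phi x.
Proof.
  intros Hinv x.
  assert (Hshift : forall a b, l1norm (vsub (vadd a v) b) = l1norm (vsub a (vsub b v))).
  { intros a b; apply finsum_ext; intros i; unfold vsub, vadd; f_equal; ring. }
  apply Rle_antisym; apply Rle_plus_epsilon; intros eps Heps.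
  - destruct (proj2 Hphi x eps Heps) as [g [Hg Hlt]].
    pose proof (proj1 Hphi (vadd x v) _ (proj1 (Hinv g Hg))).
    rewrite Hshift in H.
    replace (vsub (vadd g v) v) with g in H
      by (apply functional_extensionality; intros; unfold vsub, vadd; ring).
    lra.
  - destruct (proj2 Hphi (vadd x v) eps Heps) as [g [Hg Hlt]].
    pose proof (proj1 Hphi x _ (proj2 (Hinv g Hg))).
    rewrite Hshift in Hlt. lra.
Qed.

(* A nearest point of the closure of S to y, as a limit of near-minimizers. *)
Lemma l1_dist_nearest_point (y : Rd d) :
  exists p, closure S p /\ phi p = 0 /\ l1norm (vsub y p) <= phi y.
Proof.
  assert (approx : forall m : nat, {g | S g /\ l1norm (vsub y g) < phi y + / (INR m + 1)}).
  { intros m; apply constructive_indefinite_description, (proj2 Hphi).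
    apply Rinv_0_lt_compat; pose proof (pos_INR m); lra. }
  set (g m := proj1_sig (approx m)).
  assert (Hg : forall m, S (g m) /\ l1norm (vsub y (g m)) < phi y + / (INR m + 1))
    by (intros m; exact (proj2_sig (approx m))).
  destruct (bounded_cvg_subseq d g (l1norm y + phi y + 1)) as [sub [p [Hinc Hcv]]].
  { intros m. destruct (Hg m) as [_ Hm].
    assert (/ (INR m + 1) <= 1).
    { rewrite <- Rinv_1. apply Rinv_le_contravar; [lra|]. pose proof (pos_INR m); lra. }
    pose proof (l1norm_triangle d (g m) y (vzero d)).
    rewrite !vsub_zero_r, l1norm_sub_sym in H0. lra. }
  exists p; split; [|split].
  - intros eps Heps. destruct (Hcv eps Heps) as [K HK].
    exists (g (sub K)); split; [apply Hg|].
    eapply Rle_lt_trans; [apply vnorm_le_l1norm|].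
    rewrite l1norm_sub_sym; apply HK; lia.
  - apply Rle_antisym; [|apply l1_dist_nonneg].
    apply Rle_plus_epsilon; intros eps Heps. destruct (Hcv eps Heps) as [K HK].
    pose proof (proj1 Hphi p _ (proj1 (Hg (sub K)))).
    rewrite l1norm_sub_sym in H. specialize (HK K (le_n K)). lra.
  - apply Rle_plus_epsilon; intros eps Heps.
    destruct (Hcv (eps / 2)) as [K HK]; [lra|].
    destruct (archimed_inv (eps / 2)) as [N HN]; [lra|].
    set (k := max K N). specialize (HK k ltac:(lia)).
    pose proof (increasing_ge_id sub Hinc k).
    specialize (HN (sub k) ltac:(lia)).
    destruct (Hg (sub k)) as [_ Hlt].
    pose proof (l1norm_triangle d y (g (sub k)) p). lra.
Qed.

Lemma l1_dist_segment (y p : Rd d) (s : R) :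
  l1norm (vsub y p) <= phi y -> 0 <= s <= 1 ->
  s * l1norm (vsub y p) <= phi (vadd p (vscal s (vsub y p))).
Proof.
  intros Hyp Hs.
  pose proof (l1_dist_lipschitz y (vadd p (vscal s (vsub y p)))) as Hlip.
  replace (vsub y (vadd p (vscal s (vsub y p)))) with (vscal (1 - s) (vsub y p)) in Hlip
    by (apply functional_extensionality; intros; unfold vsub, vadd, vscal; ring).
  rewrite l1norm_scal, Rabs_right in Hlip by lra. nra.
Qed.

End L1Dist.

Lemma Csub_diag (z : Cplx) : Csub z z = C0.
Proof. unfold Csub, Cadd, Copp, C0; simpl; f_equal; ring. Qed.

Definition zero_space {d} (f : Rd d -> Cplx) : Prop := forall x, f x = C0.

Lemma DiffPow_periodic d (v : Rd d) (f : Rd d -> Cplx) (m : nat) :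
  (forall x, f (vadd x v) = f x) -> (0 < m)%nat -> zero_space (DiffPow v m f).
Proof.
  intros Hper Hm. destruct m as [|m]; [lia|]. clear Hm.
  induction m as [|m IH]; intros x; cbn [DiffPow]; unfold Diff.
  - rewrite Hper; apply Csub_diag.
  - change (Csub (DiffPow v (S m) f (vadd x v)) (DiffPow v (S m) f x) = C0).
    rewrite !IH; apply Csub_diag.
Qed.

Lemma zero_space_fin_dim d : fin_dim_subspace_C (@zero_space d).
Proof.
  unfold zero_space; repeat split.
  - intros f Hf x eps Heps. exists 1; split; [lra|]. intros y _.
    rewrite !Hf, Csub_diag. unfold Cnorm, C0; simpl.
    replace (0 * (0 * 1) + 0 * (0 * 1)) with 0 by ring. rewrite sqrt_0; lra.
  - intros f g Hf Hg x. rewrite Hf, Hg. unfold Cadd, C0; simpl; f_equal; ring.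
  - intros c f Hf x. rewrite Hf. unfold Cmul, C0; simpl; f_equal; ring.
  - exists nil; intros f Hf. exists nil; split; [reflexivity|]. exact Hf.
Qed.

Lemma zero_space_Diff d (v : Rd d) (f : Rd d -> Cplx) :
  zero_space f -> zero_space (Diff v f).
Proof. intros Hf x. unfold Diff. rewrite !Hf. apply Csub_diag. Qed.

Definition derivable_at (f : R -> R) (s : R) : Prop := exists l, derivable_pt_lim f s l.

Definition cderivable_at (F : R -> Cplx) (s : R) : Prop :=
  derivable_at (fun r => fst (F r)) s /\ derivable_at (fun r => snd (F r)) s.

Lemma derivable_at_const c s : derivable_at (fun _ => c) s.
Proof. exists 0; apply derivable_pt_lim_const. Qed.

Lemma derivable_at_id s : derivable_at (fun r => r) s.
Proof. exists 1; apply derivable_pt_lim_id. Qed.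

Lemma derivable_at_plus f g s :
  derivable_at f s -> derivable_at g s -> derivable_at (fun r => f r + g r) s.
Proof. intros [a Ha] [b Hb]; exists (a + b); exact (derivable_pt_lim_plus f g s a b Ha Hb). Qed.

Lemma derivable_at_minus f g s :
  derivable_at f s -> derivable_at g s -> derivable_at (fun r => f r - g r) s.
Proof. intros [a Ha] [b Hb]; exists (a - b); exact (derivable_pt_lim_minus f g s a b Ha Hb). Qed.

Lemma derivable_at_mult f g s :
  derivable_at f s -> derivable_at g s -> derivable_at (fun r => f r * g r) s.
Proof. intros [a Ha] [b Hb]; eexists; exact (derivable_pt_lim_mult f g s a b Ha Hb). Qed.

Lemma derivable_at_comp f g s :
  derivable_at f s -> (forall x, derivable_at g x) -> derivable_at (fun r => g (f r)) s.
Proof.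
  intros [a Ha] Hg. destruct (Hg (f s)) as [b Hb].
  eexists; exact (derivable_pt_lim_comp f g s a b Ha Hb).
Qed.

Lemma cderivable_at_const c s : cderivable_at (fun _ => c) s.
Proof. split; apply derivable_at_const. Qed.

Lemma cderivable_at_add F G s :
  cderivable_at F s -> cderivable_at G s -> cderivable_at (fun r => Cadd (F r) (G r)) s.
Proof. intros [] []; split; apply derivable_at_plus; auto. Qed.

Lemma cderivable_at_mul F G s :
  cderivable_at F s -> cderivable_at G s -> cderivable_at (fun r => Cmul (F r) (G r)) s.
Proof.
  intros [] []; split; simpl;
    [apply derivable_at_minus | apply derivable_at_plus]; apply derivable_at_mult; auto.
Qed.

Lemma cderivable_at_exp F s : cderivable_at F s -> cderivable_at (fun r => Cexp (F r)) s.
Proof.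
  intros [Hre Him].
  assert (Hexp : forall x, derivable_at exp x) by (intros x; eexists; apply derivable_pt_lim_exp).
  assert (Hcos : forall x, derivable_at cos x) by (intros x; eexists; apply derivable_pt_lim_cos).
  assert (Hsin : forall x, derivable_at sin x) by (intros x; eexists; apply derivable_pt_lim_sin).
  split; simpl; apply derivable_at_mult; apply derivable_at_comp; auto.
Qed.

Lemma cderivable_at_cfinsum d (F : Fin.t d -> R -> Cplx) s :
  (forall i, cderivable_at (F i) s) -> cderivable_at (fun r => cfinsum d (fun i => F i r)) s.
Proof.
  revert F; induction d as [|d IH]; intros F HF; simpl; [apply cderivable_at_const|].
  apply cderivable_at_add; [apply HF|apply (IH (fun i => F (Fin.FS i))); auto].
Qed.

Section Line.
Variables (d : nat) (x u : Rd d) (s : R).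

Lemma cderivable_at_coord i : cderivable_at (fun r => CR (vadd x (vscal r u) i)) s.
Proof.
  split; simpl; unfold vadd, vscal;
    auto using derivable_at_plus, derivable_at_mult, derivable_at_const, derivable_at_id.
Qed.

Lemma cderivable_at_poly p : is_poly p -> cderivable_at (fun r => p (vadd x (vscal r u))) s.
Proof.
  induction 1;
    auto using cderivable_at_const, cderivable_at_coord, cderivable_at_add, cderivable_at_mul.
Qed.

Lemma cderivable_at_cdot lam : cderivable_at (fun r => cdot lam (vadd x (vscal r u))) s.
Proof.
  apply (cderivable_at_cfinsum d (fun i r => Cmul (lam i) (CR (vadd x (vscal r u) i)))).
  intros i; apply cderivable_at_mul; [apply cderivable_at_const|apply cderivable_at_coord].
Qed.

Lemma exp_poly_derivable_on_line (phi : Rd d -> R) :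
  exp_poly (fun y => CR (phi y)) -> derivable_at (fun r => phi (vadd x (vscal r u))) s.
Proof.
  intros [terms [Hpoly Heq]].
  assert (Hsum : cderivable_at (fun r => csum_list (map (fun pl =>
      Cmul (fst pl (vadd x (vscal r u))) (Cexp (cdot (snd pl) (vadd x (vscal r u)))))
      terms)) s).
  { clear Heq. induction terms as [|pl terms IH]; simpl; [apply cderivable_at_const|].
    apply cderivable_at_add.
    - apply cderivable_at_mul; [apply cderivable_at_poly, Hpoly; simpl; auto|].
      apply cderivable_at_exp, cderivable_at_cdot.
    - apply IH; intros; apply Hpoly; simpl; auto. }
  destruct Hsum as [[l Hl] _]. exists l.
  eapply derivable_pt_lim_ext; [|exact Hl]. intros r; simpl. now rewrite <- Heq.
Qed.

End Line.

(* The one-sided difference quotients at 0 are >= c on the right and <= 0 on the left. *)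
Lemma not_derivable_at_corner (f : R -> R) (c : R) :
  0 < c -> f 0 = 0 -> (forall r, 0 <= f r) -> (forall r, 0 < r <= 1 -> r * c <= f r) ->
  ~ derivable_at f 0.
Proof.
  intros Hc Hf0 Hnonneg Hslope [l Hl].
  destruct (Hl (c / 2)) as [delta Hdelta]; [lra|].
  set (r := Rmin (delta / 2) (1 / 2)).
  assert (Hr : 0 < r /\ r < delta /\ r <= 1 / 2).
  { destruct delta as [dl Hdl]; unfold r, Rmin; simpl.
    destruct (Rle_dec (dl / 2) (1 / 2)); lra. }
  assert (Hright := Hdelta r ltac:(lra) ltac:(rewrite Rabs_right; lra)).
  assert (Hleft := Hdelta (- r) ltac:(lra) ltac:(rewrite Rabs_Ropp, Rabs_right; lra)).
  rewrite Rplus_0_l, Hf0, Rminus_0_r in Hright, Hleft.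
  apply Rabs_def2 in Hright. apply Rabs_def2 in Hleft.
  assert (c <= f r / r).
  { apply Rmult_le_reg_r with r; [lra|]. unfold Rdiv.
    rewrite Rmult_assoc, Rinv_l by lra. specialize (Hslope r ltac:(lra)). lra. }
  assert (f (- r) / - r <= 0).
  { unfold Rdiv. rewrite Rinv_opp.
    pose proof (Rinv_0_lt_compat r ltac:(lra)). pose proof (Hnonneg (- r)). nra. }
  lra.
Qed.

Theorem proposition7 (d t : nat) (n : nat -> nat) (h : nat -> Rd d)
  (V L : Rd d -> Prop) :
  (0 < t)%nat ->
  (forall k, (k < t)%nat -> (0 < n k)%nat) ->
  is_vsubspace V ->
  (exists x, ~ V x) ->
  is_add_subgroup L ->
  is_discrete L ->
  is_direct_sum (closure (gen_subgroup t h)) V L ->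
  exists (H : (Rd d -> Cplx) -> Prop) (phi : Rd d -> R),
    fin_dim_subspace_C H /\
    (forall k f, (k < t)%nat -> H f -> H (Diff (h k) f)) /\
    rcontinuous phi /\
    (forall k, (k < t)%nat -> H (DiffPow (h k) (n k) (fun x => CR (phi x)))) /\
    ~ exp_poly (fun x => CR (phi x)).
Proof.
  intros _ Hn HV [x0 Hx0] HL Hdisc Hds.
  set (G := gen_subgroup t h) in *.
  destruct (not_all_ex_not _ _ (direct_sum_discrete_not_full d _ V L x0 HV Hx0 HL Hdisc Hds))
    as [y Hy].
  destruct (exists_l1_dist d G _ (gen_subgroup_zero d t h)) as [phi Hphi].
  destruct (l1_dist_nearest_point d G phi Hphi y) as [p [Hp [Hp0 Hyp]]].
  exists zero_space, phi; split; [|split; [|split; [|split]]].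
  - apply zero_space_fin_dim.
  - intros k f _; apply zero_space_Diff.
  - exact (l1_dist_continuous d G phi Hphi).
  - intros k Hk. apply DiffPow_periodic; [|auto].
    intros x. f_equal. apply (l1_dist_periodic d G phi Hphi).
    intros g; apply gen_subgroup_add_sub; auto.
  - intros Hexp.
    apply (not_derivable_at_corner (fun r => phi (vadd p (vscal r (vsub y p))))
             (l1norm (vsub y p))).
    + apply l1norm_sub_pos. intros ->. exact (Hy Hp).
    + replace (vadd p (vscal 0 (vsub y p))) with p; auto.
      apply functional_extensionality; intros; unfold vadd, vscal; ring.
    + intros r; apply (l1_dist_nonneg d G phi Hphi).
    + intros r Hr; apply (l1_dist_segment d G phi Hphi); auto; lra.
    + apply exp_poly_derivable_on_line, Hexp.
Qed.
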